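(* Let $\pi$ be a representation of $\mathcal A_\alpha$ on a Hilbert space of finite dimension $n$. (i) $\Lambda_{T(\pi)}=2-\Lambda_\pi$. (ii) Let $\alpha>0$, $\alpha\ne1$. (a) If $\operatorname{rk}\pi(x_1)+\operatorname{rk}\pi(x_2)>n=\operatorname{rk}\pi(x_3)+\operatorname{rk}\pi(x_4)$, then $\Lambda_{S(\pi)}=\{0\}\cup\big(\frac{\alpha}{\alpha-1}-\frac1{\alpha-1}\Lambda_\pi\big)$. (b) If $\operatorname{rk}\pi(x_3)+\operatorname{rk}\pi(x_4)>n=\operatorname{rk}\pi(x_1)+\operatorname{rk}\pi(x_2)$, then $\Lambda_{S(\pi)}=\{\frac{\alpha}{\alpha-1}\}\cup\big(\frac{\alpha}{\alpha-1}-\frac1{\alpha-1}\Lambda_\pi\big)$. (iii) Let $\alpha\in(0,3)$. (a) If $\operatorname{rk}\pi(x_1)+\operatorname{rk}\pi(x_2)<n=\operatorname{rk}\pi(x_3)+\operatorname{rk}\pi(x_4)$, then $\Lambda_{\Phi^+(\pi)}=\{0\}\cup\big(1-\frac1{3-\alpha}+\frac1{3-\alpha}\Lambda_\pi\big)$. (b) If $\operatorname{rk}\pi(x_3)+\operatorname{rk}\pi(x_4)<n=\operatorname{rk}\pi(x_1)+\operatorname{rk}\pi(x_2)$, then $\Lambda_{\Phi^+(\pi)}=\{1+\frac1{3-\alpha}\}\cup\big(1-\frac1{3-\alpha}+\frac1{3-\alpha}\Lambda_\pi\big)$. (Here $c-d\Lambda=\{c-d\lambda:\lambda\in\Lambda\}$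 etc.)
   Context: For $\alpha\in\mathbb R$, a representation $\pi$ of $\mathcal A_\alpha$ (the universal C*-algebra generated by projections $x_1,\dots,x_4$ with $x_1+\dots+x_4=\alpha$) on a Hilbert space $\mathcal H$ is a quadruple $(\pi(x_1),\dots,\pi(x_4))$ of orthogonal projections on $\mathcal H$ with sum $\alpha I$. For finite-dimensional $\pi$, $\Lambda_\pi\subseteq[0,2]$ denotes the set of eigenvalues of $\pi(x_3)+\pi(x_4)$. Linear reflection: $T(\pi)$ is the representation of $\mathcal A_{4-\alpha}$ on $\mathcal H$ with $T(\pi)(x_i)=I-\pi(x_i)$. Hyperbolic reflection: for $\alpha>0$, $\alpha\neq1$ and $\pi$ on $\mathcal H$, let $\widehat{\mathcal H}=\bigoplus_{i=1}^4\operatorname{ran}\pi(x_i)$, let $w_i:\operatorname{ran}\pi(x_i)\to\widehat{\mathcal H}$ be the canonical injections, $u_i:\operatorname{ran}\pi(x_i)\to\mathcal H$ the inclusions, and $u=\frac1{\sqrt\alpha}(u_1^*,u_2^*,u_3^*,u_4^* )^{T}:\mathcal H\to\widehat{\mathcal H}$ (an isometry). Let $\mathcal K=\operatorname{ran}(I-uu^* )\subseteq\widehat{\mathcal H}$ with inclusion $v:\mathcal K\to\widehat{\mathcal H}$. Then $S(\pi)$ is the representation of $\mathcal A_{\alpha/(\alpha-1)}$ on $\mathcal K$ with $S(\pi)(x_i)=\frac{\alpha}{\alpha-1}v^*w_iw_i^*v$ (these are projections summing to $\frac\alpha{\alpha-1}I$). For $\alpha\in(0,3)$, $\Phi^+(\pi)=S(T(\pi))$,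 a representation of $\mathcal A_{1+\frac1{3-\alpha}}$. *)

(* Finite-dimensional Hilbert spaces are modelled concretely:
   an n-dimensional Hilbert space is C^n (row vectors 'rV[C]_n, MathComp's
   convention: operators act on the right, v *m A), over an arbitrary
   numeric algebraically closed field C (e.g. the complex numbers R[i]). *)
From HB Require Import structures.
From mathcomp Require Import all_boot all_order all_algebra.
Set Implicit Arguments. Unset Strict Implicit. Unset Printing Implicit Defensive.
Import Order.TTheory GRing.Theory Num.Theory.
Local Open Scope ring_scope.

Section Defs.
Variable C : numClosedFieldType.

Definition adjmx m k (A : 'M[C]_(m, k)) : 'M[C]_(k, m) :=
  (map_mx (fun z : C => z^*) A)^T.

Definition is_proj n (A : 'M[C]_n) : Prop := A *m A = A /\ adjmx A = A.

(* generators x_1, ..., x_4 are indexed by 'I_4 : o1 = x_1, ..., o4 = x_4 *)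
Definition o1 : 'I_4 := @Ordinal 4 0 erefl.
Definition o2 : 'I_4 := @Ordinal 4 1 erefl.
Definition o3 : 'I_4 := @Ordinal 4 2 erefl.
Definition o4 : 'I_4 := @Ordinal 4 3 erefl.

(* a representation of A_alpha on C^n: four orthogonal projections with
   sum alpha I, alpha real *)
Definition is_rep n (alpha : C) (P : 'I_4 -> 'M[C]_n) : Prop :=
  alpha \is Num.real /\ (forall i, is_proj (P i)) /\ \sum_(i < 4) P i = alpha%:M.

Definition Lambda n (P : 'I_4 -> 'M[C]_n) : C -> Prop :=
  fun l => eigenvalue (P o3 + P o4) l.

Definition Trep n (P : 'I_4 -> 'M[C]_n) : 'I_4 -> 'M[C]_n :=
  fun i => 1%:M - P i.

(* Hyperbolic reflection.  hat H = ran P1 (+) ... (+) ran P4 is realised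
   isometrically inside H^4 = C^(4n), indexed by 'I_4 * 'I_n (component i,
   coordinate k), as the range of the block diagonal projection
   diag(P1,...,P4).  The injection w_i w_i^adj becomes the projection onto the
   i-th component of hat H, i.e. the block matrix with P_i at (i,i);
   u h = alpha^(-1/2) (P1 h, ..., P4 h), so u u^adj has (i,j) block
   alpha^-1 P_i P_j, and K = ran (I - u u^adj) is the range of
   Kproj = diag(P1..P4) - u u^adj. *)
Definition bigdim n := #|{: 'I_4 * 'I_n }|.

Definition blk n (F : 'I_4 -> 'I_4 -> 'M[C]_n) : 'M[C]_(bigdim n) :=
  \matrix_(a, b)
    F (enum_val a).1 (enum_val b).1 (enum_val a).2 (enum_val b).2.

Definition hatproj n (P : 'I_4 -> 'M[C]_n) : 'M[C]_(bigdim n) :=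
  blk (fun i j => if i == j then P i else 0).

Definition uustar n (alpha : C) (P : 'I_4 -> 'M[C]_n) : 'M[C]_(bigdim n) :=
  blk (fun i j => alpha^-1 *: (P i *m P j)).

Definition Kproj n (alpha : C) (P : 'I_4 -> 'M[C]_n) : 'M[C]_(bigdim n) :=
  hatproj P - uustar alpha P.

Definition wwstar n (P : 'I_4 -> 'M[C]_n) (i0 : 'I_4) : 'M[C]_(bigdim n) :=
  blk (fun i j => if (i == i0) && (j == i0) then P i else 0).

(* S(pi)(x_i) = alpha/(alpha-1) v^adj w_i w_i^adj v, as an operator on C^(4n)
   whose restriction to K = ran Kproj is the operator of the paper *)
Definition Srep n (alpha : C) (P : 'I_4 -> 'M[C]_n) : 'I_4 -> 'M[C]_(bigdim n) :=
  fun i => (alpha / (alpha - 1)) *: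
             (Kproj alpha P *m wwstar P i *m Kproj alpha P).

Definition sub_eigenvalue N (V A : 'M[C]_N) : C -> Prop :=
  fun l => exists y : 'rV[C]_N, [/\ y != 0, y *m V = y & y *m A = l *: y].

Definition LambdaS n (alpha : C) (P : 'I_4 -> 'M[C]_n) : C -> Prop :=
  sub_eigenvalue (Kproj alpha P) (Srep alpha P o3 + Srep alpha P o4).

(* Phi^+(pi) = S(T(pi)), T(pi) a representation of A_(4 - alpha) *)
Definition LambdaPhiPlus n (alpha : C) (P : 'I_4 -> 'M[C]_n) : C -> Prop :=
  LambdaS (4 - alpha) (Trep P).

End Defs.

From HB Require Import structures.
From mathcomp Require Import all_boot all_order all_algebra.
From mathcomp Require Import ring zify.
Set Implicit Arguments. Unset Strict Implicit. Unset Printing Implicit Defensive.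
Import Order.TTheory GRing.Theory Num.Theory.
Local Open Scope ring_scope.

(* (i) T(pi)(x_3) + T(pi)(x_4) = 2 - (pi(x_3) + pi(x_4)), so the spectrum is
   reflected.  A vector y lies in K exactly when y_j is in
   ran P_j for all j and sum_j y_j = 0, and on K the eigen-equation of
   S(pi)(x_3) + S(pi)(x_4) becomes an explicit linear system in the y_j,
   driven by t = y_3 + y_4 ([eigen_system]).  If t <> 0 then t is an
   eigenvector of P_3 + P_4 and l = alpha/(alpha-1) - m/(alpha-1); if t = 0
   the system degenerates to l = 0 with a common fixed vector of P_1, P_2, or
   to l = alpha/(alpha-1) with a common fixed vector of P_3, P_4.  Conversely
   each of these data yields an eigenvector in K.  Which degenerate values
   occur is decided by dimension counting for pairs of projections (section
   TwoProjections), using the rank hypotheses.  Finally (iii) follows by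
   applying (ii) to T(pi), a representation of A_(4 - alpha), and composing
   the affine maps of (i) and (ii). *)

Section TwoProjections.
Variables (C : numClosedFieldType) (n : nat) (P Q : 'M[C]_n).
Hypotheses (hP : is_proj P) (hQ : is_proj Q).

Lemma fixed_of_submx (R : 'M[C]_n) (v : 'rV[C]_n) :
  R *m R = R -> (v <= R)%MS -> v *m R = v.
Proof. by move=> hR /submxP [D ->]; rewrite -mulmxA hR. Qed.

Lemma trmx_proj (R : 'M[C]_n) : is_proj R -> R^T = map_mx Num.conj R.
Proof. by case=> _ hR; rewrite -{1}hR /adjmx trmxK. Qed.

(* Self-adjointness identifies the column space of row_mx P Q with the
   (row) space P + Q, so that kernel dimensions can be computed from it. *)
Lemma rank_row_proj : \rank (row_mx P Q) = \rank (P + Q)%MS.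
Proof.
rewrite -mxrank_tr tr_row_mx (trmx_proj hP) (trmx_proj hQ).
by rewrite -(map_col_mx (Num.conj : {rmorphism C -> C})) mxrank_map addsmxE.
Qed.

Lemma common_fixedP :
  (exists2 v : 'rV[C]_n, v != 0 & v *m P = v /\ v *m Q = v) <->
  (0 < \rank (P :&: Q)%MS)%N.
Proof.
rewrite lt0n mxrank_eq0; split.
  case=> v vnz [vP vQ]; apply/rowV0Pn; exists v => //.
  by rewrite sub_capmx -{1}vP -{2}vQ !submxMl.
case/rowV0Pn => v hv vnz; exists v => //.
split; apply: fixed_of_submx; [exact: hP.1 | | exact: hQ.1 |].
  exact: submx_trans hv (capmxSl _ _).
exact: submx_trans hv (capmxSr _ _).
Qed.

Lemma common_kernelP :
  (exists2 w : 'rV[C]_n, w != 0 & w *m P = 0 /\ w *m Q = 0) <->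
  (\rank (P + Q)%MS < n)%N.
Proof.
have -> : (\rank (P + Q)%MS < n)%N = (0 < \rank (kermx (row_mx P Q)))%N.
  by rewrite mxrank_ker rank_row_proj subn_gt0.
rewrite lt0n mxrank_eq0; split.
  case=> w wnz [wP wQ]; apply/rowV0Pn; exists w => //.
  by apply/sub_kermxP; rewrite mul_mx_row wP wQ row_mx0.
case/rowV0Pn => w /sub_kermxP; rewrite mul_mx_row => /eqP.
by rewrite row_mx_eq0 => /andP [/eqP wP /eqP wQ] wnz; exists w.
Qed.

Lemma common_fixed_of_rank_gt : (n < \rank P + \rank Q)%N ->
  exists2 v : 'rV[C]_n, v != 0 & v *m P = v /\ v *m Q = v.
Proof.
move=> h; apply/common_fixedP.
by have := mxrank_sum_cap P Q; have := rank_leq_col (P + Q)%MS; lia.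
Qed.

Lemma common_kernel_of_common_fixed : (\rank P + \rank Q)%N = n ->
  (exists2 v : 'rV[C]_n, v != 0 & v *m P = v /\ v *m Q = v) ->
  exists2 w : 'rV[C]_n, w != 0 & w *m P = 0 /\ w *m Q = 0.
Proof.
by move=> h /common_fixedP hcap; apply/common_kernelP; have := mxrank_sum_cap P Q; lia.
Qed.

(* When rk P + rk Q = n, a nonzero kernel vector of P + Q produces a common
   fixed vector: either w P = - w Q <> 0 is one, or w is in both kernels. *)
Lemma common_fixed_of_sum_kernel (w : 'rV[C]_n) : (\rank P + \rank Q)%N = n ->
  w != 0 -> w *m (P + Q) = 0 ->
  exists2 v : 'rV[C]_n, v != 0 & v *m P = v /\ v *m Q = v.
Proof.
move=> h wnz; rewrite mulmxDr => e.
have wPQ : w *m P = - (w *m Q) by apply/eqP; rewrite -addr_eq0 e.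
have [wP0|wPnz] := eqVneq (w *m P) 0; last first.
  exists (w *m P) => //; split; first by rewrite -mulmxA hP.1.
  by rewrite [in LHS]wPQ mulNmx -mulmxA hQ.1 -wPQ.
have wQ0 : w *m Q = 0 by apply: oppr_inj; rewrite -wPQ wP0 oppr0.
have hker : (\rank (P + Q)%MS < n)%N by apply/common_kernelP; exists w.
by apply/common_fixedP; have := mxrank_sum_cap P Q; lia.
Qed.

End TwoProjections.

Lemma opposite_fixed (C : numClosedFieldType) (n : nat) (R : 'M[C]_n)
    (a b : 'rV[C]_n) :
  a + b = 0 -> b *m R = b -> a *m R = a.
Proof. by move/eqP; rewrite addr_eq0 => /eqP -> hb; rewrite mulNmx hb. Qed.

Section BlockVectors.
Variables (C : numClosedFieldType) (n : nat).

Definition comp (j : 'I_4) (y : 'rV[C]_(bigdim n)) : 'rV[C]_n :=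
  \row_k y 0 (enum_rank (j, k)).

Definition glue (f : 'I_4 -> 'rV[C]_n) : 'rV[C]_(bigdim n) :=
  \row_a f (enum_val a).1 0 (enum_val a).2.

Lemma comp_glue f j : comp j (glue f) = f j.
Proof. by apply/rowP => k; rewrite !mxE enum_rankK. Qed.

Lemma comp_inj y y' : (forall j, comp j y = comp j y') -> y = y'.
Proof.
move=> h; apply/rowP => a; rewrite -(enum_valK a).
by case: (enum_val a) => j k; move/rowP: (h j) => /(_ k); rewrite !mxE.
Qed.

Lemma compD j y z : comp j (y + z) = comp j y + comp j z.
Proof. by apply/rowP => k; rewrite !mxE. Qed.

Lemma compB j y z : comp j (y - z) = comp j y - comp j z.
Proof. by apply/rowP => k; rewrite !mxE. Qed.

Lemma compZ j a y : comp j (a *: y) = a *: comp j y.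
Proof. by apply/rowP => k; rewrite !mxE. Qed.

Lemma comp0 j : comp j 0 = 0.
Proof. by apply/rowP => k; rewrite !mxE. Qed.

Lemma comp_blk j y (F : 'I_4 -> 'I_4 -> 'M[C]_n) :
  comp j (y *m blk F) = \sum_i comp i y *m F i j.
Proof.
apply/rowP => k; rewrite !mxE summxE.
rewrite (reindex (@enum_rank _)) /=; last first.
  by exists enum_val => x _; rewrite ?enum_valK ?enum_rankK.
rewrite [RHS](eq_bigr (fun i => \sum_k' y 0 (enum_rank (i, k')) * F i j k' k)).
  by rewrite pair_bigA; apply: eq_bigr => -[i k'] _ /=; rewrite !mxE !enum_rankK.
by move=> i _; rewrite !mxE; apply: eq_bigr => k' _; rewrite !mxE.
Qed.

Lemma ord4_cases (j : 'I_4) : [\/ j = o1, j = o2, j = o3 | j = o4].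
Proof.
case: j => [[|[|[|[|m]]]] hm] //.
- by apply: Or41; apply: val_inj.
- by apply: Or42; apply: val_inj.
- by apply: Or43; apply: val_inj.
- by apply: Or44; apply: val_inj.
Qed.

Lemma comp4_eq0 y : comp o1 y = 0 -> comp o2 y = 0 -> comp o3 y = 0 ->
  comp o4 y = 0 -> y = 0.
Proof.
move=> h1 h2 h3 h4; apply: comp_inj => j.
by rewrite comp0; case: (ord4_cases j) => ->.
Qed.

End BlockVectors.

Lemma sum4 (V : zmodType) (F : 'I_4 -> V) :
  \sum_i F i = F o1 + F o2 + F o3 + F o4.
Proof.
rewrite !big_ord_recr big_ord0 /= add0r.
by congr (F _ + F _ + F _ + F _); apply: val_inj.
Qed.

Section HyperbolicReflection.
Variables (C : numClosedFieldType) (n : nat) (alpha : C) (P : 'I_4 -> 'M[C]_n).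
Hypothesis hrep : is_rep alpha P.
Hypotheses (ha0 : alpha != 0) (ha1 : alpha - 1 != 0).

Let hproj i : is_proj (P i) := hrep.2.1 i.
Let hP i : P i *m P i = P i := (hproj i).1.
Let hsum : \sum_i P i = alpha%:M := hrep.2.2.

Lemma sumP_scale (v : 'rV[C]_n) : \sum_j v *m P j = alpha *: v.
Proof. by rewrite -mulmx_sumr hsum mul_mx_scalar. Qed.

Lemma sum12_complement (w : 'rV[C]_n) :
  w *m P o1 + w *m P o2 = alpha *: w - w *m (P o3 + P o4).
Proof.
rewrite -(sumP_scale w) (sum4 (fun j => w *m P j)) mulmxDr.
by rewrite -[_ + _ + _ + _]addrA addrK.
Qed.

Lemma comp_Kproj j y : comp j (y *m Kproj alpha P) =
  comp j y *m P j - alpha^-1 *: ((\sum_i comp i y *m P i) *m P j).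
Proof.
rewrite /Kproj mulmxBr compB /hatproj /uustar !comp_blk; congr (_ - _).
  rewrite (bigD1 j) //= eqxx big1 ?addr0 // => i /negbTE.
  by rewrite eq_sym => ->; rewrite mulmx0.
rewrite mulmx_suml scaler_sumr; apply: eq_bigr => i _.
by rewrite -scalemxAr mulmxA.
Qed.

Lemma comp_wwstar j k y : comp j (y *m wwstar P k) =
  if j == k then comp k y *m P k else 0.
Proof.
rewrite /wwstar comp_blk; have [_|hjk] := eqVneq j k.
  rewrite (bigD1 k) //= eqxx big1 ?addr0 // => i /negbTE ->.
  by rewrite mulmx0.
by rewrite big1 // => i _; rewrite andbF mulmx0.
Qed.

(* Membership in K = ran (I - u u^adj), described componentwise. *)
Definition in_K (y : 'rV[C]_(bigdim n)) : Prop :=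
  (forall j, comp j y *m P j = comp j y) /\ \sum_j comp j y = 0.

Lemma Kproj_fixedP y : y *m Kproj alpha P = y <-> in_K y.
Proof.
split=> [hy|[hfix hsum0]]; last first.
  apply: comp_inj => j; rewrite comp_Kproj hfix (eq_bigr _ (fun i _ => hfix i)).
  by rewrite hsum0 mul0mx scaler0 subr0.
have hfix j : comp j y *m P j = comp j y.
  have e := congr1 (comp j) hy; rewrite comp_Kproj in e; rewrite -e mulmxBl -scalemxAl.
  by rewrite -!mulmxA !hP.
split=> //; rewrite -[LHS](congr1 (fun z => \sum_j comp j z) hy).
under eq_bigr => j _ do rewrite comp_Kproj.
rewrite sumrB -scaler_sumr -mulmx_sumr hsum mul_mx_scalar scalerA mulVf //.
by rewrite scale1r subrr.
Qed.

Lemma comp_Srep k j y : in_K y -> comp j (y *m Srep alpha P k) =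
  (alpha / (alpha - 1)) *: ((if j == k then comp k y else 0)
                            - alpha^-1 *: (comp k y *m P j)).
Proof.
move=> hK; have hy := (Kproj_fixedP y).2 hK.
rewrite /Srep -scalemxAr compZ !mulmxA hy comp_Kproj comp_wwstar.
rewrite (eq_bigr (fun i => if i == k then comp k y else 0)); last first.
  move=> i _; rewrite comp_wwstar.
  by have [->|_] := eqVneq i k; rewrite ?hK.1 ?mul0mx.
rewrite (bigD1 k) //= eqxx big1 => [|i /negbTE -> //]; rewrite addr0.
by have [->|_] := eqVneq j k; rewrite ?hK.1 ?mul0mx.
Qed.

Definition S34 : 'M[C]_(bigdim n) := Srep alpha P o3 + Srep alpha P o4.

Lemma S34_components y : in_K y ->
  let t := comp o3 y + comp o4 y in
  [/\ comp o1 (y *m S34) = - ((alpha - 1)^-1 *: (t *m P o1)),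
      comp o2 (y *m S34) = - ((alpha - 1)^-1 *: (t *m P o2)),
      comp o3 (y *m S34) =
        alpha / (alpha - 1) *: comp o3 y - (alpha - 1)^-1 *: (t *m P o3) &
      comp o4 (y *m S34) =
        alpha / (alpha - 1) *: comp o4 y - (alpha - 1)^-1 *: (t *m P o4)].
Proof.
move=> hK t.
have hcd : alpha / (alpha - 1) * alpha^-1 = (alpha - 1)^-1.
  by field; rewrite ha0 ha1.
rewrite /S34; split; rewrite mulmxDr compD !comp_Srep //= !scalerBr !scalerA hcd
  /t mulmxDl scalerDr ?scaler0 ?sub0r ?add0r -?opprD ?addr0 //.
  by rewrite opprD addrA.
by rewrite opprD [LHS]addrCA.
Qed.

(* The eigen-equation y S34 = l y for y in K, in terms of the components
   y_j of y; it is driven by t = y_3 + y_4. *)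
Definition eigen_system (y1 y2 y3 y4 : 'rV[C]_n) (l : C) : Prop :=
  [/\ y1 *m P o1 = y1, y2 *m P o2 = y2, y3 *m P o3 = y3, y4 *m P o4 = y4
    & y1 + y2 + y3 + y4 = 0] /\
  [/\ l *: y1 = - ((alpha - 1)^-1 *: ((y3 + y4) *m P o1)),
      l *: y2 = - ((alpha - 1)^-1 *: ((y3 + y4) *m P o2)),
      l *: y3 = alpha / (alpha - 1) *: y3 - (alpha - 1)^-1 *: ((y3 + y4) *m P o3)
    & l *: y4 = alpha / (alpha - 1) *: y4 - (alpha - 1)^-1 *: ((y3 + y4) *m P o4)].

Lemma LambdaS_systemP l : LambdaS alpha P l <->
  exists y1 y2 y3 y4 : 'rV[C]_n,
    ~ [/\ y1 = 0, y2 = 0, y3 = 0 & y4 = 0] /\ eigen_system y1 y2 y3 y4 l.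
Proof.
split.
  case=> y [ynz yK hyl]; have hK := (Kproj_fixedP y).1 yK.
  have hyl' : y *m S34 = l *: y := hyl.
  move: (S34_components hK) => /=; rewrite hyl' !compZ => -[E1 E2 E3 E4].
  exists (comp o1 y), (comp o2 y), (comp o3 y), (comp o4 y); split.
    by case=> h1 h2 h3 h4; move/eqP: ynz; apply; apply: comp4_eq0.
  split=> //; split; try exact: hK.1.
  by have := hK.2; rewrite (sum4 (fun j => comp j y)).
case=> y1 [y2 [y3 [y4 [ynz [[i1 i2 i3 i4 hs] [E1 E2 E3 E4]]]]]].
pose y := glue (fun j => if j == o1 then y1 else if j == o2 then y2
                         else if j == o3 then y3 else y4).
have c1 : comp o1 y = y1 by rewrite comp_glue.
have c2 : comp o2 y = y2 by rewrite comp_glue.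
have c3 : comp o3 y = y3 by rewrite comp_glue.
have c4 : comp o4 y = y4 by rewrite comp_glue.
have hK : in_K y.
  split; last by rewrite (sum4 (fun j => comp j y)) c1 c2 c3 c4.
  by move=> j; case: (ord4_cases j) => ->; rewrite ?c1 ?c2 ?c3 ?c4.
exists y; split.
- by apply/eqP => y0; apply: ynz; rewrite -c1 -c2 -c3 -c4 y0 !comp0.
- exact: (Kproj_fixedP y).2 hK.
- change (y *m S34 = l *: y); apply: comp_inj => j.
  move: (S34_components hK) => /= [F1 F2 F3 F4].
  by case: (ord4_cases j) => ->; rewrite ?F1 ?F2 ?F3 ?F4 compZ ?c1 ?c2 ?c3 ?c4.
Qed.

Lemma solve_component (a p : 'rV[C]_n) l :
  l *: a = alpha / (alpha - 1) *: a - (alpha - 1)^-1 *: p ->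
  p = (alpha - l * (alpha - 1)) *: a.
Proof.
move=> e.
have -> : p = (alpha - 1) *: ((alpha - 1)^-1 *: p) by rewrite scalerA divff // scale1r.
have -> : (alpha - 1)^-1 *: p = (alpha / (alpha - 1) - l) *: a.
  by rewrite scalerBl e opprB addrCA subrr addr0.
by rewrite scalerA; congr (_ *: _); field.
Qed.

Lemma degenerate_spectrum y1 y2 y3 y4 l :
  ~ [/\ y1 = 0, y2 = 0, y3 = 0 & y4 = 0] -> eigen_system y1 y2 y3 y4 l ->
  y3 + y4 = 0 ->
  (l = 0 /\ exists2 v : 'rV[C]_n, v != 0 & v *m P o1 = v /\ v *m P o2 = v)
  \/ (l = alpha / (alpha - 1) /\
       exists2 v : 'rV[C]_n, v != 0 & v *m P o3 = v /\ v *m P o4 = v).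
Proof.
move=> ynz [[i1 i2 i3 i4 hs] [E1 E2 E3 E4]] t0.
move: E1 E2 E3 E4; rewrite t0 !mul0mx !scaler0 !oppr0 !addr0 => E1 E2 E3 E4.
have y4E : y4 = - y3 by apply/eqP; rewrite -addr_eq0 addrC t0.
have [l0|lnz] := eqVneq l 0.
  left; split=> //.
  have hc0 : alpha / (alpha - 1) != 0 by rewrite mulf_neq0 ?invr_neq0.
  have y30 : y3 = 0.
    by move/esym/eqP: E3; rewrite l0 scale0r scaler_eq0 (negbTE hc0) => /eqP.
  rewrite y4E y30 oppr0 !addr0 in hs.
  exists y1; last by split=> //; apply: opposite_fixed hs i2.
  apply/eqP => y10; apply: ynz; split=> //; last by rewrite y4E y30 oppr0.
  by rewrite -hs y10 add0r.
right.
have y10 : y1 = 0 by move/eqP: E1; rewrite scaler_eq0 (negbTE lnz) => /eqP.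
have y20 : y2 = 0 by move/eqP: E2; rewrite scaler_eq0 (negbTE lnz) => /eqP.
have y3nz : y3 != 0.
  by apply/eqP => y30; apply: ynz; split=> //; rewrite y4E y30 oppr0.
split.
  move/eqP: E3; rewrite -subr_eq0 -scalerBl scaler_eq0 (negbTE y3nz) orbF.
  by rewrite subr_eq0 => /eqP.
by exists y3 => //; split=> //; apply: opposite_fixed t0 i4.
Qed.

Lemma LambdaS_spectrum l : LambdaS alpha P l ->
  (exists2 m, Lambda P m & l = alpha / (alpha - 1) - (alpha - 1)^-1 * m)
  \/ (l = 0 /\ exists2 v : 'rV[C]_n, v != 0 & v *m P o1 = v /\ v *m P o2 = v)
  \/ (l = alpha / (alpha - 1) /\
       exists2 v : 'rV[C]_n, v != 0 & v *m P o3 = v /\ v *m P o4 = v).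
Proof.
case/LambdaS_systemP => y1 [y2 [y3 [y4 [ynz hsys]]]].
have [t0|tnz] := eqVneq (y3 + y4) 0.
  by right; exact: (degenerate_spectrum ynz hsys t0).
left; exists (alpha - l * (alpha - 1)); last by field.
apply/eigenvalueP; exists (y3 + y4) => //.
have [_ [_ _ E3 E4]] := hsys.
by rewrite mulmxDr (solve_component E3) (solve_component E4) scalerDr.
Qed.

Lemma LambdaS_zero (v : 'rV[C]_n) : v != 0 -> v *m P o1 = v -> v *m P o2 = v ->
  LambdaS alpha P 0.
Proof.
move=> vnz h1 h2; apply/LambdaS_systemP; exists v, (- v), 0, 0; split.
  by case=> /eqP; rewrite (negbTE vnz).
by split; split; rewrite ?(addr0, add0r, mul0mx, scaler0, scale0r, oppr0,
  subrr, mulNmx, h1, h2).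
Qed.

Lemma LambdaS_top (v : 'rV[C]_n) : v != 0 -> v *m P o3 = v -> v *m P o4 = v ->
  LambdaS alpha P (alpha / (alpha - 1)).
Proof.
move=> vnz h3 h4; apply/LambdaS_systemP; exists 0, 0, v, (- v); split.
  by case=> _ _ /eqP; rewrite (negbTE vnz).
by split; split; rewrite ?(addr0, add0r, mul0mx, scaler0, scale0r, oppr0,
  subr0, subrr, mulNmx, h3, h4).
Qed.

(* A nonzero eigenvalue m of P_3 + P_4, with eigenvector t, gives the
   eigenvalue l = alpha/(alpha-1) - m/(alpha-1) on K provided l <> 0: solve the
   system by y_3 = t P_3 / m, y_4 = t P_4 / m, y_j = - t P_j / ((alpha-1) l). *)
Lemma LambdaS_shift (t : 'rV[C]_n) m : t != 0 ->
  t *m (P o3 + P o4) = m *: t -> m != 0 ->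
  alpha / (alpha - 1) - (alpha - 1)^-1 * m != 0 ->
  LambdaS alpha P (alpha / (alpha - 1) - (alpha - 1)^-1 * m).
Proof.
move=> tnz htm mnz lnz.
have amz : alpha - m != 0.
  apply: contra_neq lnz => /eqP; rewrite subr_eq0 => /eqP <-.
  by field.
set l := alpha / (alpha - 1) - (alpha - 1)^-1 * m.
set d := (alpha - 1)^-1.
pose y3 := m^-1 *: (t *m P o3).
pose y4 := m^-1 *: (t *m P o4).
have ht : y3 + y4 = t.
  by rewrite /y3 /y4 -scalerDr -mulmxDr htm scalerA mulVf // scale1r.
have h12 : t *m P o1 + t *m P o2 = (alpha - m) *: t.
  by rewrite sum12_complement htm scalerBl.
apply/LambdaS_systemP.
exists (- ((d / l) *: (t *m P o1))), (- ((d / l) *: (t *m P o2))), y3, y4.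
split.
  by case=> _ _ y30 y40; move/eqP: tnz; apply; rewrite -ht y30 y40 addr0.
split; split; rewrite ?ht.
- by rewrite mulNmx -scalemxAl -mulmxA hP.
- by rewrite mulNmx -scalemxAl -mulmxA hP.
- by rewrite /y3 -scalemxAl -mulmxA hP.
- by rewrite /y4 -scalemxAl -mulmxA hP.
- rewrite -addrA ht -opprD -scalerDr h12 scalerA (_ : d / l * (alpha - m) = 1).
    by rewrite scale1r addNr.
  by rewrite /l /d; field; rewrite ha1 amz.
- rewrite scalerN scalerA; congr (- (_ *: _)).
  by rewrite /l /d; field; rewrite ha1 amz.
- rewrite scalerN scalerA; congr (- (_ *: _)).
  by rewrite /l /d; field; rewrite ha1 amz.
- rewrite /y3 !scalerA -scalerBl; congr (_ *: _).
  by rewrite /l /d; field; rewrite ?ha1 ?mnz.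
- rewrite /y4 !scalerA -scalerBl; congr (_ *: _).
  by rewrite /l /d; field; rewrite ?ha1 ?mnz.
Qed.

Lemma LambdaS_case_a : (n < \rank (P o1) + \rank (P o2))%N ->
  n = (\rank (P o3) + \rank (P o4))%N ->
  forall l, LambdaS alpha P l <->
   (l = 0 \/ exists2 m, Lambda P m & l = alpha / (alpha - 1) - (alpha - 1)^-1 * m).
Proof.
move=> h12 h34 l; split.
  case/LambdaS_spectrum => [|[[-> _]|[-> hfix]]]; [by right | by left |].
  right; exists 0; last by rewrite mulr0 subr0.
  have [w wnz [w3 w4]] := common_kernel_of_common_fixed (hproj o3) (hproj o4)
    (esym h34) hfix.
  by apply/eigenvalueP; exists w => //; rewrite mulmxDr w3 w4 addr0 scale0r.
have [v1 v1nz [h1 h2]] := common_fixed_of_rank_gt (hproj o1) (hproj o2) h12.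
case=> [->|[m hm ->]]; first exact: LambdaS_zero v1nz h1 h2.
move/eigenvalueP: (hm) => [t ht tnz].
have [m0|mnz] := eqVneq m 0.
  rewrite m0 mulr0 subr0.
  have ht0 : t *m (P o3 + P o4) = 0 by rewrite ht m0 scale0r.
  have [v vnz [h3 h4]] := common_fixed_of_sum_kernel (hproj o3) (hproj o4)
    (esym h34) tnz ht0.
  exact: LambdaS_top vnz h3 h4.
have [->|lnz] := eqVneq (alpha / (alpha - 1) - (alpha - 1)^-1 * m) 0.
  exact: LambdaS_zero v1nz h1 h2.
exact: LambdaS_shift tnz ht mnz lnz.
Qed.

Lemma LambdaS_case_b : (n < \rank (P o3) + \rank (P o4))%N ->
  n = (\rank (P o1) + \rank (P o2))%N ->
  forall l, LambdaS alpha P l <->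
   (l = alpha / (alpha - 1) \/
    exists2 m, Lambda P m & l = alpha / (alpha - 1) - (alpha - 1)^-1 * m).
Proof.
move=> h34 h12 l; split.
  case/LambdaS_spectrum => [|[[-> hfix]|[-> _]]]; [by right | | by left].
  right; exists alpha; last by field.
  have [w wnz [w1 w2]] := common_kernel_of_common_fixed (hproj o1) (hproj o2)
    (esym h12) hfix.
  apply/eigenvalueP; exists w => //.
  move: (sum12_complement w); rewrite w1 w2 addr0 => /eqP.
  by rewrite eq_sym subr_eq0 => /eqP.
have [v3 v3nz [h3 h4]] := common_fixed_of_rank_gt (hproj o3) (hproj o4) h34.
case=> [->|[m hm ->]]; first exact: LambdaS_top v3nz h3 h4.
move/eigenvalueP: (hm) => [t ht tnz].
have [m0|mnz] := eqVneq m 0.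
  by rewrite m0 mulr0 subr0; exact: LambdaS_top v3nz h3 h4.
have [l0|lnz] := eqVneq (alpha / (alpha - 1) - (alpha - 1)^-1 * m) 0; last first.
  exact: LambdaS_shift tnz ht mnz lnz.
have ma : m = alpha.
  have : alpha - m = (alpha - 1) * (alpha / (alpha - 1) - (alpha - 1)^-1 * m).
    by field.
  by rewrite l0 mulr0 => /eqP; rewrite subr_eq0 => /eqP.
have e : t *m (P o1 + P o2) = 0 by rewrite mulmxDr sum12_complement ht ma subrr.
have [v vnz [h1 h2]] := common_fixed_of_sum_kernel (hproj o1) (hproj o2)
  (esym h12) tnz e.
by rewrite l0; exact: LambdaS_zero vnz h1 h2.
Qed.

End HyperbolicReflection.

Section LinearReflection.
Variables (C : numClosedFieldType) (n : nat).

Lemma proj_compl (R : 'M[C]_n) : is_proj R -> is_proj (1%:M - R).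
Proof.
case=> h1 h2; split; first by rewrite mulmxBl mul1mx mulmxBr mulmx1 h1 subrr subr0.
by move: h2; rewrite /adjmx map_mxB map_mx1 linearB /= trmx1 => ->.
Qed.

(* rk (I - R) = n - rk R for an idempotent R, as ran (I - R) = ker R. *)
Lemma rank_compl (R : 'M[C]_n) : R *m R = R -> \rank (1%:M - R) = (n - \rank R)%N.
Proof.
move=> h; rewrite -mxrank_ker; apply/eqP; rewrite eqn_leq; apply/andP; split.
  by apply: mxrankS; apply/sub_kermxP; rewrite mulmxBl mul1mx h subrr.
apply: mxrankS; rewrite -[X in (X <= _)%MS](_ : kermx R *m (1%:M - R) = kermx R).
  exact: submxMl.
by rewrite mulmxBr mulmx1 mulmx_ker subr0.
Qed.

Lemma Trep_rep (alpha : C) (P : 'I_4 -> 'M[C]_n) :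
  is_rep alpha P -> is_rep (4 - alpha) (Trep P).
Proof.
case=> hreal [hproj hsum]; split; first by rewrite rpredB ?realn.
split=> [i|]; first exact: proj_compl.
rewrite /Trep sumrB hsum sumr_const card_ord raddfB /=.
by rewrite -[in RHS](mulr1n (1 : C)) -mulrnA raddfMn.
Qed.

Lemma Lambda_Trep (P : 'I_4 -> 'M[C]_n) l :
  Lambda (Trep P) l <-> exists2 m, Lambda P m & l = 2 - m.
Proof.
have hM : Trep P o3 + Trep P o4 = (2 : C)%:M - (P o3 + P o4).
  apply/matrixP => i j; rewrite /Trep !mxE.
  by case: (i == j); rewrite /= ?mulr1n ?mulr0n; ring.
rewrite /Lambda hM; split.
  case/eigenvalueP => v hv vnz; exists (2 - l); last by ring.
  apply/eigenvalueP; exists v => //.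
  move: hv; rewrite mulmxBr mul_mx_scalar => hv.
  by rewrite scalerBl -hv opprB addrCA subrr addr0.
case=> m /eigenvalueP [v hv vnz] ->; apply/eigenvalueP; exists v => //.
by rewrite mulmxBr mul_mx_scalar hv scalerBl.
Qed.

Lemma Lambda_Trep_shift (alpha : C) (P : 'I_4 -> 'M[C]_n) l : 3 - alpha != 0 ->
  (exists2 m', Lambda (Trep P) m' &
     l = (4 - alpha) / (4 - alpha - 1) - (4 - alpha - 1)^-1 * m') <->
  (exists2 m, Lambda P m & l = 1 - (3 - alpha)^-1 + (3 - alpha)^-1 * m).
Proof.
move=> h3; rewrite (_ : 4 - alpha - 1 = 3 - alpha); last by ring.
split; first by case=> _ /Lambda_Trep [m hm ->] ->; exists m => //; field.
case=> m hm ->; exists (2 - m); first by apply/Lambda_Trep; exists m.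
by field.
Qed.

End LinearReflection.

Theorem lemma4p3 (C : numClosedFieldType) (n : nat) (alpha : C)
    (P : 'I_4 -> 'M[C]_n) :
  is_rep alpha P ->
  (* (i) *)
  (forall l : C, Lambda (Trep P) l <->
     exists2 m : C, Lambda P m & l = 2 - m) /\
  (* (ii) *)
  (0 < alpha -> alpha != 1 ->
    ((n < \rank (P o1) + \rank (P o2))%N ->
     n = (\rank (P o3) + \rank (P o4))%N ->
     forall l : C, LambdaS alpha P l <->
       (l = 0 \/ exists2 m : C, Lambda P m &
                   l = alpha / (alpha - 1) - (alpha - 1)^-1 * m)) /\
    ((n < \rank (P o3) + \rank (P o4))%N ->
     n = (\rank (P o1) + \rank (P o2))%N ->
     forall l : C, LambdaS alpha P l <->
       (l = alpha / (alpha - 1) \/ exists2 m : C, Lambda P m &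
                   l = alpha / (alpha - 1) - (alpha - 1)^-1 * m))) /\
  (* (iii) *)
  (0 < alpha < 3 ->
    ((\rank (P o1) + \rank (P o2) < n)%N ->
     n = (\rank (P o3) + \rank (P o4))%N ->
     forall l : C, LambdaPhiPlus alpha P l <->
       (l = 0 \/ exists2 m : C, Lambda P m &
                   l = 1 - (3 - alpha)^-1 + (3 - alpha)^-1 * m)) /\
    ((\rank (P o3) + \rank (P o4) < n)%N ->
     n = (\rank (P o1) + \rank (P o2))%N ->
     forall l : C, LambdaPhiPlus alpha P l <->
       (l = 1 + (3 - alpha)^-1 \/ exists2 m : C, Lambda P m &
                   l = 1 - (3 - alpha)^-1 + (3 - alpha)^-1 * m))).
Proof.
move=> hrep; split; first exact: Lambda_Trep.
split.
  move=> a0 a1; have ha0 : alpha != 0 by rewrite gt_eqF.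
  have ha1 : alpha - 1 != 0 by rewrite subr_eq0.
  by split; [exact: LambdaS_case_a | exact: LambdaS_case_b].
case/andP => a0 a3; have h3 : 3 - alpha != 0 by rewrite gt_eqF ?subr_gt0.
have e43 : 4 - alpha - 1 = 3 - alpha by ring.
have hT := Trep_rep hrep; have hT1 : 4 - alpha - 1 != 0 by rewrite e43.
have hT0 : 4 - alpha != 0 by rewrite gt_eqF ?subr_gt0 // (lt_trans a3) ?ltr_nat.
have rk i : \rank (Trep P i) = (n - \rank (P i))%N.
  by rewrite rank_compl ?(hrep.2.1 i).1.
have := rank_leq_col (P o1); have := rank_leq_col (P o2).
have := rank_leq_col (P o3); have := rank_leq_col (P o4) => r4 r3 r2 r1.
split=> hlt heq l.
  apply: iff_trans (LambdaS_case_a hT hT0 hT1 _ _ l) _; try (rewrite !rk; lia).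
  exact: or_iff_compat_l (Lambda_Trep_shift _ _ h3).
apply: iff_trans (LambdaS_case_b hT hT0 hT1 _ _ l) _; try (rewrite !rk; lia).
apply: iff_trans (or_iff_compat_l _ (Lambda_Trep_shift _ _ h3)) _.
by rewrite (_ : (4 - alpha) / (4 - alpha - 1) = 1 + (3 - alpha)^-1) // e43; field.
Qed.
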